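(* Let $\alpha\in(\frac12,1)$ and run Algorithm 1 on vectors $g_t$ with $\|g_t\|\le G$ and learning rates $$\eta_t=\frac{G^{2\alpha-1}}{\big(2G^2+\sum_{i=1}^{t-1}\|g_i\|^2\big)^\alpha}.$$ Then $S_T\le\sqrt{4+\frac1{2\alpha-1}}$ for every $T\ge0$; in particular $S_\infty=\lim_{T\to\infty}S_T\le\sqrt{4+\frac1{2\alpha-1}}$.
   Context: $\|\cdot\|$ is the Euclidean norm, $G>0$. In Algorithm 1, $S_0^2=4$ and for $t\ge1$, with $\ell_t=\eta_tg_t$, $S_t^2=S_{t-1}^2+\|\ell_t\|^2$ ($S_t>0$). *)

From HB Require Import structures.
From mathcomp Require Import all_boot all_order all_algebra.
From mathcomp Require Import all_classical all_reals all_analysis.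
Set Implicit Arguments. Unset Strict Implicit. Unset Printing Implicit Defensive.
Import Order.TTheory GRing.Theory Num.Theory.
Local Open Scope ring_scope.

Definition enorm (R : realType) (d : nat) (v : 'rV[R]_d) : R :=
  Num.sqrt (\sum_(i < d) (v ord0 i) ^+ 2).

Definition eta (R : realType) (d : nat) (G alpha : R) (g : nat -> 'rV[R]_d)
  (t : nat) : R :=
  G `^ (2 * alpha - 1) /
  (2 * G ^+ 2 + \sum_(1 <= i < t) enorm (g i) ^+ 2) `^ alpha.

(* S_T with S_0^2 = 4, S_t^2 = S_{t-1}^2 + ||eta_t g_t||^2, S_t > 0 *)
Definition S (R : realType) (d : nat) (G alpha : R) (g : nat -> 'rV[R]_d)
  (T : nat) : R :=
  Num.sqrt (4 + \sum_(1 <= t < T.+1) enorm (eta G alpha g t *: g t) ^+ 2).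

From Pilot Require Import Defs.
From HB Require Import structures.
From mathcomp Require Import all_boot all_order all_algebra.
From mathcomp Require Import all_classical all_reals all_analysis.
From mathcomp Require Import ring lra.
Import Order.TTheory GRing.Theory Num.Theory.
Import numFieldNormedType.Exports.
Local Open Scope classical_set_scope.
Local Open Scope ring_scope.

(* Write p = 2 alpha - 1 > 0, a_t = ||g_t||^2 <= G^2 and
   Q_t = G^2 + a_1 + ... + a_{t-1}, so that eta_t = G^p / (Q_t + G^2)^alpha
   and ||eta_t g_t||^2 = G^(2p) a_t / (Q_t + G^2)^(p+1).
   1. Convexity of x |-> x^(-p) gives the tangent bound
        p (v - u) / v^(p+1) <= u^(-p) - v^(-p)      (0 < u <= v).
   2. With u = Q_t, v = Q_{t+1} = Q_t + a_t <= Q_t + G^2 this yields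
        a_t / (Q_t + G^2)^(p+1) <= (Q_t^(-p) - Q_{t+1}^(-p)) / p,
      and the sum over t telescopes to at most Q_1^(-p) / p = G^(-2p) / p.
      This is done for an arbitrary sequence 0 <= a_t <= B.
   3. Hence sum_t ||eta_t g_t||^2 <= 1/p, i.e. S_T^2 <= 4 + 1/p for all T.
   4. (S_T) is nondecreasing and bounded, so it converges, and its limit
      satisfies the same bound. *)

Lemma powR_neg_tangent {R : realType} {p u v : R} : 0 < p -> 0 < u -> u <= v ->
  p * (v - u) / v `^ (p + 1) <= u `^ (- p) - v `^ (- p).
Proof.
move=> p_gt0 u_gt0 le_uv.
have v_gt0 : 0 < v by apply: lt_le_trans le_uv.
rewrite powRD ?(gt_eqF v_gt0) ?implybT // powRr1; last exact: ltW.
rewrite /powR (gt_eqF u_gt0) (gt_eqF v_gt0).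
set E := expR (- p * ln v); set L := ln v - ln u.
have E_gt0 : 0 < E by apply: expR_gt0.
have vpE : expR (p * ln v) = E^-1 by rewrite /E mulNr expRN invrK.
have upE : expR (- p * ln u) = E * expR (p * L).
  by rewrite /E -expRD; congr expR; rewrite /L; ring.
(* ln (v / u) >= 1 - u / v, from ln (1 + x) <= x at x = u / v - 1. *)
have lnL : 1 - u / v <= L.
  have := @le_ln1Dx R (u / v - 1).
  rewrite (addrC 1) subrK ln_div ?posrE //.
  have -> : -1 < u / v - 1 by have := divr_gt0 u_gt0 v_gt0; lra.
  by move=> /(_ isT); rewrite /L; lra.
(* 1 + x <= exp x at x = p ln (v / u). *)
have expL : p * (1 - u / v) <= expR (p * L) - 1.
  have := expR_ge1Dx (p * L).
  have : p * (1 - u / v) <= p * L by rewrite ler_pM2l.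
  lra.
rewrite upE vpE.
have -> : p * (v - u) / (E^-1 * v) = E * (p * (1 - u / v)).
  by field; rewrite ?gt_eqF ?invr_gt0.
have -> : E * expR (p * L) - E = E * (expR (p * L) - 1) by ring.
by rewrite ler_pM2l.
Qed.

Lemma enorm_ge0 (R : realType) d (v : 'rV[R]_d) : 0 <= enorm v.
Proof. exact: sqrtr_ge0. Qed.

Lemma enorm_sq (R : realType) d (v : 'rV[R]_d) :
  enorm v ^+ 2 = \sum_(i < d) (v ord0 i) ^+ 2.
Proof. by rewrite /enorm sqr_sqrtr // sumr_ge0 // => i _; exact: sqr_ge0. Qed.

Lemma enormZ_sq (R : realType) d (c : R) (v : 'rV[R]_d) :
  enorm (c *: v) ^+ 2 = c ^+ 2 * enorm v ^+ 2.
Proof.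
by rewrite !enorm_sq mulr_sumr; apply: eq_bigr => i _; rewrite mxE exprMn.
Qed.

Lemma powR_sqr (R : realType) (x y : R) : 0 <= x -> (x `^ y) ^+ 2 = x `^ (y * 2).
Proof. by move=> x_ge0; rewrite powRrM -powR_mulrn ?powR_ge0. Qed.

Section AdaptiveSums.
Context {R : realType} {p B : R} {a : nat -> R}.
Hypotheses (p_gt0 : 0 < p) (B_gt0 : 0 < B).
Hypotheses (a_ge0 : forall t, 0 <= a t) (a_leB : forall t, (1 <= t)%N -> a t <= B).

Definition cumsum (t : nat) : R := B + \sum_(1 <= i < t) a i.

Lemma cumsum_gt0 t : 0 < cumsum t.
Proof. by rewrite /cumsum ltr_pwDl // sumr_ge0. Qed.

Lemma cumsumS t : (1 <= t)%N -> cumsum t.+1 = cumsum t + a t.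
Proof. by move=> t_ge1; rewrite /cumsum big_nat_recr //= addrA. Qed.

Lemma cumsum1 : cumsum 1 = B.
Proof. by rewrite /cumsum big_geq // addr0. Qed.

Lemma adaptive_step t : (1 <= t)%N ->
  a t / (cumsum t + B) `^ (p + 1) <= (cumsum t `^ (- p) - cumsum t.+1 `^ (- p)) / p.
Proof.
move=> t_ge1; have Q_gt0 := cumsum_gt0 t.
have QS_gt0 := cumsum_gt0 t.+1.
have le_QQS : cumsum t <= cumsum t.+1 by rewrite cumsumS // lerDl.
have le_QSB : cumsum t.+1 <= cumsum t + B by rewrite cumsumS // lerD2l a_leB.
have tangent := powR_neg_tangent p_gt0 Q_gt0 le_QQS.
rewrite cumsumS // addrC addKr -cumsumS // in tangent.
have QB_gt0 : 0 < cumsum t + B by rewrite addr_gt0.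
apply: le_trans (_ : a t / cumsum t.+1 `^ (p + 1) <= _).
  rewrite ler_wpM2l // lef_pV2 ?posrE ?powR_gt0 //.
  apply: ge0_ler_powR le_QSB; rewrite ?nnegrE; apply: ltW => //.
  exact: addr_gt0 p_gt0 ltr01.
by rewrite ler_pdivlMr // mulrC mulrA.
Qed.

(* Summing the steps telescopes: the total is at most B^(-p) / p,
   independently of T. *)
Lemma adaptive_sum_bound T :
  \sum_(1 <= t < T.+1) a t / (cumsum t + B) `^ (p + 1) <= B `^ (- p) / p.
Proof.
apply: le_trans (_ : \sum_(1 <= t < T.+1)
    (cumsum t `^ (- p) - cumsum t.+1 `^ (- p)) / p <= _).
  by apply: ler_sum_nat => t /andP[t_ge1 _]; exact: adaptive_step.
rewrite -mulr_suml (telescope_sumr_eq (fun t => - cumsum t `^ (- p))) //; last first.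
  by move=> t _; rewrite opprK addrC.
by rewrite cumsum1 ler_pM2r ?invr_gt0 // opprK addrC lerBlDr lerDl powR_ge0.
Qed.

End AdaptiveSums.

Arguments cumsum {R} B a t.

Section AdaGradSteps.
Context {R : realType} {d : nat} {G alpha : R} {g : nat -> 'rV[R]_d}.
Hypotheses (G_gt0 : 0 < G) (alpha_gt : 2^-1 < alpha).
Hypothesis g_leG : forall t : nat, (1 <= t)%N -> enorm (g t) <= G.

Let p := 2 * alpha - 1.
Let a (t : nat) : R := enorm (g t) ^+ 2.

Lemma p_gt0 : 0 < p.
Proof. by have := alpha_gt; rewrite /p; lra. Qed.

Lemma step_sq_eq t : enorm (Defs.eta G alpha g t *: g t) ^+ 2 =
  G `^ (p * 2) * (a t / (cumsum (G ^+ 2) a t + G ^+ 2) `^ (p + 1)).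
Proof.
have Q_ge0 : 0 <= cumsum (G ^+ 2) a t + G ^+ 2.
  by rewrite /cumsum !addr_ge0 ?sqr_ge0 ?sumr_ge0 // => i _; exact: sqr_ge0.
rewrite /Defs.eta (_ : 2 * G ^+ 2 + _ = cumsum (G ^+ 2) a t + G ^+ 2); last first.
  by rewrite /cumsum /a; ring.
have G_ge0 : 0 <= G by exact: ltW.
rewrite enormZ_sq expr_div_n !powR_sqr ?powR_ge0 //.
by rewrite -/p (_ : alpha * 2 = p + 1) /a; [ring | rewrite /p; ring].
Qed.

Lemma sum_step_sq_bound T :
  \sum_(1 <= t < T.+1) enorm (Defs.eta G alpha g t *: g t) ^+ 2 <= p^-1.
Proof.
have a_leB t : (1 <= t)%N -> a t <= G ^+ 2.
  by move=> /g_leG; rewrite /a ler_sqr ?nnegrE ?enorm_ge0 ?(ltW G_gt0).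
under eq_bigr do rewrite step_sq_eq.
rewrite -mulr_sumr.
apply: le_trans (ler_wpM2l (powR_ge0 _ _)
  (adaptive_sum_bound p_gt0 (exprn_gt0 2 G_gt0) (fun t => sqr_ge0 _) a_leB T)) _.
rewrite -powR_mulrn; last exact: ltW.
rewrite -powRrM mulrA -powRD; last by rewrite (gt_eqF G_gt0) implybT.
by rewrite (_ : p * 2 + 2 * - p = 0) ?powRr0 ?mul1r //; ring.
Qed.

Lemma S_bound T : S G alpha g T <= Num.sqrt (4 + p^-1).
Proof.
rewrite /S ler_sqrt; last by rewrite addr_ge0 // invr_ge0 ltW // p_gt0.
by rewrite lerD2l sum_step_sq_bound.
Qed.

End AdaGradSteps.

Lemma S_nondecreasing (R : realType) d (G alpha : R) (g : nat -> 'rV[R]_d) n :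
  S G alpha g n <= S G alpha g n.+1.
Proof.
rewrite /S ler_sqrt; last by rewrite addr_ge0 // sumr_ge0 // => t _; exact: sqr_ge0.
by rewrite lerD2l [leRHS]big_nat_recr //= lerDl sqr_ge0.
Qed.

Lemma nondecreasing_bounded_lim (R : realType) (u : R ^nat) (M : R) :
  (forall n, u n <= u n.+1) -> (forall n, u n <= M) ->
  cvg (u @ \oo) /\ lim (u @ \oo) <= M.
Proof.
move=> u_mono u_leM.
have u_cvg : cvg (u @ \oo).
  apply: nondecreasing_is_cvgn; first exact/nondecreasing_seqP.
  by exists M => _ [n _ <-]; exact: u_leM.
by split=> //; apply: limr_le => //; apply: filterE.
Qed.

Theorem lemma22 (R : realType) (d : nat) (G alpha : R) (g : nat -> 'rV[R]_d)
  (hG : 0 < G) (halpha : 2^-1 < alpha < 1)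
  (hg : forall t : nat, (1 <= t)%N -> enorm (g t) <= G) :
  (forall T : nat, S G alpha g T <= Num.sqrt (4 + (2 * alpha - 1)^-1)) /\
  (cvg (S G alpha g @ \oo) /\
   lim (S G alpha g @ \oo) <= Num.sqrt (4 + (2 * alpha - 1)^-1)).
Proof.
have [alpha_gt _] := andP halpha.
have bound := S_bound hG alpha_gt hg.
split=> //.
exact: nondecreasing_bounded_lim (@S_nondecreasing R d G alpha g) bound.
Qed.
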